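(* Let $K$ be a field, $s\ge2$, $S=K[t_1,\ldots,t_s]$ with each $t_i$ of degree $1$, and let $\mathcal{L}\subset\mathbb{Z}^s$ be a lattice such that $I(\mathcal{L})$ is a graded ideal with $\dim S/I(\mathcal{L})=1$. Then $\mathbb{Z}^s/\mathcal{L}$ is torsion-free if and only if $I(\mathcal{L})=(t_1-t_s,\ldots,t_{s-1}-t_s)$.
   Context: A lattice is a subgroup of $\mathbb{Z}^s$. For $a\in\mathbb{Z}^s$ write $a=a^+-a^-$ with $a^+,a^-\in\mathbb{N}^s$ of disjoint supports, $t^c=t_1^{c_1}\cdots t_s^{c_s}$; $I(\mathcal{L})=(\{t^{a^+}-t^{a^-}:a\in\mathcal{L}\})$. Graded means generated by homogeneous polynomials; $\dim$ is Krull dimension. *)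

From mathcomp Require Import all_boot all_order all_algebra.
From mathcomp Require Import mpoly.
Set Implicit Arguments. Unset Strict Implicit. Unset Printing Implicit Defensive.
Import GRing.Theory Num.Theory.
Local Open Scope ring_scope.

Definition is_lattice (s : nat) (L : 'rV[int]_s -> Prop) : Prop :=
  L 0 /\ (forall a b, L a -> L b -> L (a - b)).

Definition posn (z : int) : nat := match z with Posz n => n | Negz _ => 0%N end.
Definition negn (z : int) : nat := match z with Posz _ => 0%N | Negz n => n.+1 end.

Definition tpos (K : fieldType) (s : nat) (a : 'rV[int]_s) : {mpoly K[s]} :=
  \prod_(i < s) 'X_i ^+ posn (a 0 i).
Definition tneg (K : fieldType) (s : nat) (a : 'rV[int]_s) : {mpoly K[s]} :=
  \prod_(i < s) 'X_i ^+ negn (a 0 i).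

Definition ideal_gen (K : fieldType) (s : nat) (G : {mpoly K[s]} -> Prop)
  (p : {mpoly K[s]}) : Prop :=
  exists (r : seq ({mpoly K[s]} * {mpoly K[s]})),
    (forall cg, cg \in r -> G cg.2) /\ p = \sum_(cg <- r) cg.1 * cg.2.

Definition lattice_ideal (K : fieldType) (s : nat) (L : 'rV[int]_s -> Prop) :
  {mpoly K[s]} -> Prop :=
  ideal_gen (fun p => exists a, L a /\ p = tpos K a - tneg K a).

Definition homogeneous (K : fieldType) (s : nat) (p : {mpoly K[s]}) : Prop :=
  exists d : nat, p \is d.-homog.

Definition graded_ideal (K : fieldType) (s : nat) (I : {mpoly K[s]} -> Prop) : Prop :=
  exists G : {mpoly K[s]} -> Prop,
    (forall g, G g -> homogeneous g) /\ (forall p, I p <-> ideal_gen G p).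

Definition is_ideal (K : fieldType) (s : nat) (P : {mpoly K[s]} -> Prop) : Prop :=
  P 0 /\ (forall p q, P p -> P q -> P (p + q)) /\ (forall c p, P p -> P (c * p)).

Definition is_prime_ideal (K : fieldType) (s : nat) (P : {mpoly K[s]} -> Prop) : Prop :=
  is_ideal P /\ ~ P 1 /\ (forall p q, P (p * q) -> P p \/ P q).

(** A chain P_0 ⊊ P_1 ⊊ ... ⊊ P_n of prime ideals of S containing I,
    i.e. a chain of length n of prime ideals of S/I. *)
Definition prime_chain_over (K : fieldType) (s : nat) (I : {mpoly K[s]} -> Prop)
  (n : nat) : Prop :=
  exists P : nat -> {mpoly K[s]} -> Prop,
    (forall k, (k <= n)%N -> is_prime_ideal (P k) /\ (forall p, I p -> P k p)) /\
    (forall k, (k < n)%N ->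
       (forall p, P k p -> P k.+1 p) /\ exists p, P k.+1 p /\ ~ P k p).

Definition krull_dim_quot (K : fieldType) (s : nat) (I : {mpoly K[s]} -> Prop)
  (n : nat) : Prop :=
  prime_chain_over I n /\ ~ prime_chain_over I n.+1.

Definition torsion_free_quot (s : nat) (L : 'rV[int]_s -> Prop) : Prop :=
  forall (v : 'rV[int]_s) (m : int), m != 0 -> L (m *: v) -> L v.

(** The generators t_i - t_s, 1 <= i <= s-1 (indices 0-based: i < s-1, j = s-1). *)
Definition diff_gens (K : fieldType) (s : nat) (p : {mpoly K[s]}) : Prop :=
  exists i j : 'I_s, (val i < s.-1)%N /\ val j = s.-1 /\ p = 'X_i - 'X_j.

From HB Require Import structures.
From Pilot Require Import Defs.
From mathcomp Require Import all_boot all_algebra.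
From mathcomp Require Import mpoly boolp.
From mathcomp Require Import zify ring.
(* Otherwise [negn] of prime.v shadows the one of Defs. *)
Import Pilot.Defs.
Set Implicit Arguments. Unset Strict Implicit. Unset Printing Implicit Defensive.
Import GRing.Theory Num.Theory.
Local Open Scope ring_scope.

(* Write J = (t_i - t_s) and e_i for the unit vectors.  Sending every t_i to a
   single variable x maps a homogeneous generator g of degree d to g(1,...,1) x^d,
   and g(1,...,1) = 0 since g lies in I(L); so the image of I(L) is zero, which
   forces every a in L to have coordinate sum 0.  Hence I(L) is contained in J,
   with equality iff all e_i - e_s lie in L.  Moreover a binomial
   t^{b+} - t^{b-} lies in I(L) only if b is in L: the linear form summing the
   coefficients of the monomials in the class of b^+ modulo L kills I(L), but
   takes the value 1 on that binomial when b is not in L.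
   If Z^s/L is torsion-free and some e_i - e_s is not in L, there is an integral
   linear form c vanishing on L with c_i <> c_s, which we may shift by a constant
   to be nonnegative; the kernels of t_j |-> y^{c_j} x, of t_j |-> x and of
   t_j |-> 0 then form a chain of three primes containing I(L), contradicting
   dim S/I(L) = 1.  If instead I(L) = J and m v is in L, then v has coordinate
   sum 0, so its binomial lies in J = I(L), whence v is in L. *)

Section Lattice.
Variables (s : nat) (L : 'rV[int]_s -> Prop).
Hypothesis hL : is_lattice L.

Lemma lattice0 : L 0. Proof. by case: hL. Qed.

Lemma latticeB a b : L a -> L b -> L (a - b). Proof. by case: hL => _; apply. Qed.

Lemma latticeN a : L a -> L (- a).
Proof. by move=> La; rewrite -sub0r; apply: latticeB => //; apply: lattice0. Qed.

Lemma latticeD a b : L a -> L b -> L (a + b).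
Proof. by move=> La Lb; rewrite -[b]opprK; apply: latticeB => //; apply: latticeN. Qed.

Lemma latticeZ (z : int) a : L a -> L (z *: a).
Proof.
move=> La; have LnZ (n : nat) : L (n%:Z *: a).
  elim: n => [|n IHn]; first by rewrite scale0r; apply: lattice0.
  have -> : Posz n.+1 = n%:Z + 1 by rewrite -PoszD addn1.
  by rewrite scalerDl scale1r; apply: latticeD.
by case: z => n; rewrite ?NegzE ?scaleNr; [apply: LnZ | apply/latticeN/LnZ].
Qed.

Lemma lattice_sum (I : Type) (r : seq I) (F : I -> 'rV[int]_s) :
  (forall i, L (F i)) -> L (\sum_(i <- r) F i).
Proof.
move=> LF; elim: r => [|x r IHr]; first by rewrite big_nil; apply: lattice0.
by rewrite big_cons; apply: latticeD.
Qed.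

Lemma lattice_mulmx k (z : 'rV[int]_k) (A : 'M[int]_(k, s)) :
  (forall i, L (row i A)) -> L (z *m A).
Proof. by move=> LA; rewrite mulmx_sum_row; apply: lattice_sum => i; apply: latticeZ. Qed.

Lemma lattice_shift x y : L (x - y) -> L x <-> L y.
Proof.
move=> Lxy; split => [Lx | Ly].
  by have := latticeB Lx Lxy; rewrite opprB addrC subrK.
by have := latticeD Ly Lxy; rewrite addrC subrK.
Qed.

Local Notation ratmx := (map_mx (intr : int -> rat)).

Lemma common_denominator (I : finType) (f : I -> rat) :
  exists2 D : int, D != 0 & exists z : I -> int, forall i, (z i)%:~R = D%:~R * f i.
Proof.
exists (\prod_i denq (f i)); first by apply/prodf_neq0 => i _; rewrite denq_neq0.
exists (fun i => numq (f i) * \prod_(j | j != i) denq (f j)) => i.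
rewrite [in RHS](bigD1 i) //= !intrM rmorph_prod /= -{3}[f i]divq_num_den.
by rewrite mulrAC [_ * (_ / _)]mulrC divfK // intr_eq0 denq_neq0.
Qed.

Lemma lattice_rat_span : exists k (A : 'M[int]_(k, s)),
  (forall i, L (row i A)) /\ forall a, L a -> (ratmx a <= ratmx A)%MS.
Proof.
pose P (r : nat) := `[< exists k (A : 'M[int]_(k, s)),
                  (forall i, L (row i A)) /\ \rank (ratmx A) = r >].
have P0 : P 0%N.
  apply/asboolP; exists 0%N, 0; split; first by case.
  by apply/eqP; rewrite -leqn0 rank_leq_row.
have Pbound r : P r -> (r <= s)%N by move=> /asboolP[k [A [_ <-]]]; apply: rank_leq_col.
case: (ex_maxnP (ex_intro _ 0%N P0) Pbound) => r /asboolP[k [A [LA rkA]]] rmax.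
exists k, A; split=> // a La.
have LAa (i : 'I_(k + 1)) : L (row i (col_mx A a)).
  rewrite -(splitK i); case: (split i) => j /=; first by rewrite rowKu.
  by rewrite rowKd (ord1 j) row_id.
have sub_col : (ratmx A <= ratmx (col_mx A a))%MS by rewrite map_col_mx -addsmxE addsmxSl.
have [le_rk eq_rk] := mxrank_leqif_sup sub_col.
have col_sub : (ratmx (col_mx A a) <= ratmx A)%MS.
  rewrite -eq_rk eqn_leq le_rk rkA rmax //.
  by apply/asboolP; exists (k + 1)%N, (col_mx A a).
by apply: submx_trans col_sub; rewrite map_col_mx -addsmxE addsmxSr.
Qed.

Lemma lattice_separating_form v : (forall m : int, m != 0 -> ~ L (m *: v)) ->
  exists c : 'I_s -> int,
    (forall a, L a -> \sum_j a 0 j * c j = 0) /\ \sum_j v 0 j * c j != 0.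
Proof.
move=> Lv; have [k [A [LA spanA]]] := lattice_rat_span; set M := ratmx A in spanA.
have vM : ratmx v *m cokermx M != 0.
  rewrite -submxE; apply/negP => /submxP[x vx].
  have [D D0 [z Dz]] := common_denominator (x 0).
  apply: (Lv D D0); suff -> : D *: v = (\row_i z i) *m A by apply: lattice_mulmx.
  apply/rowP => j; apply: (@intr_inj rat).
  have := congr1 (fun w : 'rV[rat]_s => (D%:~R *: w) 0 j) vx.
  rewrite !mxE intrM => ->; rewrite rmorph_sum mulr_sumr.
  by apply: eq_bigr => t _; rewrite mxE rmorphM /= mxE Dz mulrA.
have [j vMj] := rV0Pn _ vM.
have [D D0 [c Dc]] := common_denominator (fun t => cokermx M t j).
have dotE (a : 'rV[int]_s) :
    (\sum_t a 0 t * c t)%:~R = D%:~R * (ratmx a *m cokermx M) 0 j :> rat.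
  rewrite rmorph_sum mxE mulr_sumr; apply: eq_bigr => t _.
  by rewrite [ratmx a 0 t]mxE rmorphM /= Dc mulrCA.
exists c; split => [a La | ].
  apply: (@intr_inj rat); rewrite dotE.
  by move: (spanA a La); rewrite submxE => /eqP ->; rewrite mxE mulr0.
by rewrite -(intr_eq0 rat) dotE mulf_neq0 ?intr_eq0.
Qed.

End Lattice.

Section Ideals.
Variables (K : fieldType) (s : nat).
Implicit Types (G P : {mpoly K[s]} -> Prop) (p q x y : {mpoly K[s]}).

Lemma ideal_gen_ideal G : is_ideal (ideal_gen G).
Proof.
split; [|split].
- by exists [::]; rewrite big_nil.
- move=> p q [r1 [G1 ->]] [r2 [G2 ->]]; exists (r1 ++ r2); rewrite big_cat.
  by split=> // cg; rewrite mem_cat => /orP[]; [apply: G1 | apply: G2].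
- move=> c p [r [Gr ->]]; exists [seq (c * cg.1, cg.2) | cg <- r]; split.
    by move=> cg /mapP[x xr ->] /=; apply: Gr.
  by rewrite big_map mulr_sumr; apply: eq_bigr => cg _; rewrite mulrA.
Qed.

Lemma mem_ideal_gen G g : G g -> ideal_gen G g.
Proof.
move=> Gg; exists [:: (1, g)]; rewrite big_seq1 mul1r.
by split=> // cg; rewrite inE => /eqP ->.
Qed.

Lemma ideal_gen_min G P : is_ideal P -> (forall g, G g -> P g) ->
  forall p, ideal_gen G p -> P p.
Proof.
move=> [P0 [PD PM]] GP p [r [Gr ->]]; elim: r Gr => [|cg r IHr] Gr.
  by rewrite big_nil.
rewrite big_cons; apply: PD; first by apply/PM/GP/Gr; rewrite mem_head.
by apply: IHr => x xr; apply: Gr; rewrite inE xr orbT.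
Qed.

Lemma idealB P p q : is_ideal P -> P p -> P q -> P (p - q).
Proof. by move=> [_ [PD PM]] Pp Pq; rewrite -mulN1r; apply/PD/PM. Qed.

Lemma ideal_prodB P (I : Type) (r : seq I) (F F' : I -> {mpoly K[s]}) :
  is_ideal P -> (forall i, P (F i - F' i)) ->
  P (\prod_(i <- r) F i - \prod_(i <- r) F' i).
Proof.
move=> hP PF; have [P0 [PD PM]] := hP.
elim: r => [|i r IHr]; first by rewrite !big_nil subrr.
rewrite !big_cons.
have -> : F i * \prod_(j <- r) F j - F' i * \prod_(j <- r) F' j =
  F i * (\prod_(j <- r) F j - \prod_(j <- r) F' j) + \prod_(j <- r) F' j * (F i - F' i).
  by ring.
by apply: PD; apply: PM.
Qed.

Lemma idealXB P x y k : is_ideal P -> P (x - y) -> P (x ^+ k - y ^+ k).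
Proof. by move=> hP Pxy; rewrite -(subn0 k) -!prodr_const_nat; apply: ideal_prodB. Qed.

Lemma rmorph_ker_ideal (R : nzRingType) (phi : {rmorphism {mpoly K[s]} -> R}) :
  is_ideal (fun p => phi p = 0).
Proof.
split; [exact: rmorph0 | split => [p q /= phip phiq | c p /= phip]].
  by rewrite rmorphD phip phiq addr0.
by rewrite rmorphM phip mulr0.
Qed.

Lemma rmorph_ker_prime (D : idomainType) (phi : {rmorphism {mpoly K[s]} -> D}) :
  is_prime_ideal (fun p => phi p = 0).
Proof.
split; [exact: rmorph_ker_ideal | split => [|p q /=]].
  by rewrite rmorph1; apply/eqP; rewrite oner_eq0.
by rewrite rmorphM => /eqP; rewrite mulf_eq0 => /orP[]/eqP; [left | right].
Qed.

Lemma lattice_binomial (L : 'rV[int]_s -> Prop) a :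
  L a -> @lattice_ideal K s L (tpos K a - tneg K a).
Proof. by move=> La; apply: mem_ideal_gen; exists a. Qed.

Lemma lattice_ideal_ker (L : 'rV[int]_s -> Prop) (R : nzRingType)
    (phi : {rmorphism {mpoly K[s]} -> R}) :
  (forall a, L a -> phi (tpos K a) = phi (tneg K a)) ->
  forall p, @lattice_ideal K s L p -> phi p = 0.
Proof.
move=> phiL; apply: ideal_gen_min; first exact: rmorph_ker_ideal.
by move=> _ [a [La ->]]; rewrite rmorphB phiL ?subrr.
Qed.

Lemma mpoly_rmorph_eq (R : nzRingType) (phi psi : {rmorphism {mpoly K[s]} -> R}) :
  (forall c, phi c%:MP = psi c%:MP) -> (forall i, phi 'X_i = psi 'X_i) -> phi =1 psi.
Proof.
move=> eqC eqX p; rewrite (mpolyE p) !rmorph_sum; apply: eq_bigr => m _.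
rewrite -mul_mpolyC !rmorphM eqC mpolyXE_id !rmorph_prod; congr (_ * _).
by apply: eq_bigr => i _; rewrite !rmorphXn eqX.
Qed.

End Ideals.

Section Monomials.
Variables (K : fieldType) (s : nat).
Implicit Types (a : 'rV[int]_s) (m : 'X_{1..s}).

Definition mnm_pos a : 'X_{1..s} := [multinom posn (a 0%R i) | i < s].
Definition mnm_neg a : 'X_{1..s} := [multinom negn (a 0%R i) | i < s].
Definition mnm_row m : 'rV[int]_s := \row_i (m i)%:Z.

Lemma tpos_mnm a : tpos K a = 'X_[mnm_pos a].
Proof. by rewrite mpolyXE_id; apply: eq_bigr => i _; rewrite mnmE. Qed.

Lemma tneg_mnm a : tneg K a = 'X_[mnm_neg a].
Proof. by rewrite mpolyXE_id; apply: eq_bigr => i _; rewrite mnmE. Qed.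

Lemma posn_negn (z : int) : z = (posn z)%:Z - (negn z)%:Z.
Proof. by case: z => n /=; rewrite ?subr0 // NegzE sub0r. Qed.

Lemma mnm_rowD m1 m2 : mnm_row (m1 + m2) = mnm_row m1 + mnm_row m2.
Proof. by apply/rowP => i; rewrite !mxE mnmDE PoszD. Qed.

Lemma mnm_row_pos_neg a : mnm_row (mnm_pos a) - mnm_row (mnm_neg a) = a.
Proof. by apply/rowP => i; rewrite !mxE !mnmE -posn_negn. Qed.

Lemma row_dot_mnm (c : 'I_s -> nat) a :
  \sum_j a 0 j * (c j)%:Z =
  (\sum_j mnm_pos a j * c j)%N%:Z - (\sum_j mnm_neg a j * c j)%N%:Z.
Proof.
rewrite !(big_morph Posz PoszD (erefl 0%:Z)) -sumrB; apply: eq_bigr => j _.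
by rewrite !mnmE !PoszM -mulrBl -posn_negn.
Qed.

Lemma row_sum_mdeg a :
  \sum_j a 0 j = (mdeg (mnm_pos a))%:Z - (mdeg (mnm_neg a))%:Z.
Proof.
rewrite !mdegE !(big_morph Posz PoszD (erefl 0%:Z)) -sumrB.
by apply: eq_bigr => j _; rewrite !mnmE -posn_negn.
Qed.

End Monomials.

Section Grading.
Variables (K : fieldType) (s : nat).

Definition subst_x : {rmorphism {mpoly K[s]} -> {poly K}} :=
  mmap (@polyC K) (fun=> 'X).

Lemma subst_x_mnm m : subst_x 'X_[m] = 'X^(mdeg m).
Proof. by rewrite /= mmapX /mmap1 prodrXr mdegE. Qed.

Lemma subst_x_homog g d :
  g \is d.-homog -> subst_x g = (meval (fun=> 1) g)%:P * 'X^d.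
Proof.
move=> /dhomogP homg; rewrite /= /mmap mevalE rmorph_sum mulr_suml.
by apply: eq_big_seq => m mg; rewrite /mmap1 !prodrXr -mdegE homg // expr1n mulr1.
Qed.

Lemma graded_lattice_sum0 (L : 'rV[int]_s -> Prop) :
  graded_ideal (@lattice_ideal K s L) -> forall a, L a -> \sum_j a 0 j = 0.
Proof.
move=> [G [Ghom GI]] a La.
have ev1_ker := @lattice_ideal_ker K s L _ (meval (fun=> 1)).
have {}ev1_ker p : @lattice_ideal K s L p -> meval (fun=> 1) p = 0.
  apply: ev1_ker => b _; rewrite tpos_mnm tneg_mnm /= !mevalX.
  by rewrite !big1 // => i _; rewrite expr1n.
have subst_x_ker p : @lattice_ideal K s L p -> subst_x p = 0.
  move=> /GI; apply: (ideal_gen_min (rmorph_ker_ideal subst_x)) => g Gg.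
  have [d homg] := Ghom g Gg.
  by rewrite (subst_x_homog homg) ev1_ker ?mul0r //; apply/GI/mem_ideal_gen.
have := subst_x_ker _ (lattice_binomial K La).
rewrite rmorphB tpos_mnm tneg_mnm !subst_x_mnm => /eqP; rewrite subr_eq0 => /eqP.
move=> /(congr1 (fun q : {poly K} => size q)); rewrite !size_polyXn => -[deg_eq].
by rewrite row_sum_mdeg deg_eq subrr.
Qed.

End Grading.

Section DiffIdeal.
Variables (K : fieldType) (s : nat).
Hypothesis s_gt0 : (0 < s)%N.
Local Notation J := (ideal_gen (@diff_gens K s)).

Lemma ilast_subproof : (s.-1 < s)%N. Proof. by rewrite ltn_predL. Qed.
Definition ilast : 'I_s := Ordinal ilast_subproof.

Lemma diff_idealX i : J ('X_i - 'X_ilast).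
Proof.
have [->|ne_i] := eqVneq i ilast.
  by rewrite subrr; case: (ideal_gen_ideal (@diff_gens K s)).
apply: mem_ideal_gen; exists i, ilast; split=> //.
by move: ne_i (ltn_ord i); rewrite -(inj_eq val_inj) /=; lia.
Qed.

Lemma diff_ideal_monomial m : J ('X_[m] - 'X_ilast ^+ mdeg m).
Proof.
rewrite mpolyXE_id mdegE -prodrXr; apply: ideal_prodB => [|i].
  exact: ideal_gen_ideal.
by apply: idealXB; [apply: ideal_gen_ideal | apply: diff_idealX].
Qed.

Lemma diff_ideal_binomial (a : 'rV[int]_s) : \sum_j a 0 j = 0 -> J (tpos K a - tneg K a).
Proof.
rewrite row_sum_mdeg => /eqP; rewrite subr_eq0 => /eqP[deg_eq].
pose y := 'X_ilast ^+ mdeg (mnm_pos a) : {mpoly K[s]}.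
have -> : tpos K a - tneg K a = (tpos K a - y) - (tneg K a - y).
  by rewrite opprB addrA subrK.
apply: idealB; first exact: ideal_gen_ideal.
  by rewrite tpos_mnm; apply: diff_ideal_monomial.
by rewrite tneg_mnm /y deg_eq; apply: diff_ideal_monomial.
Qed.

End DiffIdeal.

Section BinomialMembership.
Variables (K : fieldType) (s : nat) (L : 'rV[int]_s -> Prop).
Hypothesis hL : is_lattice L.
Hypothesis L_sum0 : forall a, L a -> \sum_j a 0 j = 0.

(* The degree bound [D] keeps the sum finite; it is harmless because [L] only
   relates monomials of equal degree. *)
Definition class_coef (u : 'X_{1..s}) (D : nat) (f : {mpoly K[s]}) : K :=
  \sum_(m : 'X_{1..s < D} | `[< L (mnm_row m - mnm_row u) >]) f@_m.

Lemma class_coef_is_linear u D : linear_for *%R (class_coef u D).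
Proof.
move=> c f g; rewrite /class_coef mulr_sumr -big_split.
by apply: eq_bigr => m _; rewrite mcoeffD mcoeffZ.
Qed.

HB.instance Definition _ u D :=
  GRing.isLinear.Build K {mpoly K[s]} K *%R (class_coef u D) (class_coef_is_linear u D).

Lemma class_coefX u D m : class_coef u D 'X_[m] =
  ((mdeg m < D)%N && `[< L (mnm_row m - mnm_row u) >])%:R.
Proof.
rewrite /class_coef; have [lt_mD | ge_mD] := ltnP (mdeg m) D; last first.
  rewrite big1 // => m' _; rewrite mcoeffX; case: eqP => // eq_m.
  by move: ge_mD; rewrite eq_m leqNgt bmdeg.
rewrite big_mkcond (bigD1 (BMultinom lt_mD)) //= mcoeffX eqxx big1 ?addr0.
  by case: asboolP.
move=> m' ne_m'; rewrite mcoeffX; case: ifP => // _; case: eqP => // eq_m.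
by case/negP: ne_m'; apply/eqP/val_inj; rewrite /= eq_m.
Qed.

Lemma class_coef_binomial u D c a : L a -> class_coef u D (c * (tpos K a - tneg K a)) = 0.
Proof.
move=> La; have /eqP := L_sum0 La; rewrite row_sum_mdeg subr_eq0 => /eqP[deg_eq].
rewrite (mpolyE c) mulr_suml linear_sum big1 // => w _.
rewrite -scalerAl linearZ /= mulrBr tpos_mnm tneg_mnm -!mpolyXD linearB /=.
have same_class : L (mnm_row (w + mnm_pos a) - mnm_row u) <->
                  L (mnm_row (w + mnm_neg a) - mnm_row u).
  apply: lattice_shift => //.
  rewrite !mnm_rowD ![_ + _ - mnm_row u]addrAC opprD addrACA subrr add0r.
  by rewrite mnm_row_pos_neg.
by rewrite !class_coefX !mdegD deg_eq (asbool_equiv_eq same_class) subrr mulr0.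
Qed.

Lemma lattice_ideal_binomial b : @lattice_ideal K s L (tpos K b - tneg K b) -> L b.
Proof.
move=> [r [r_gen r_eq]]; case: (pselect (L b)) => // nLb.
pose u := mnm_pos b.
have := congr1 (class_coef u (mdeg u).+1) r_eq.
rewrite [RHS]linear_sum big_seq big1 => [|cg /r_gen[a [La ->]]]; last first.
  exact: class_coef_binomial.
have nL_neg : ~ L (mnm_row (mnm_neg b) - mnm_row u).
  by move/(latticeN hL); rewrite opprB mnm_row_pos_neg.
rewrite linearB /= tpos_mnm tneg_mnm !class_coefX ltnSn subrr (asboolT (lattice0 hL)).
by rewrite (asboolF nL_neg) andbF subr0 => /eqP; rewrite oner_eq0.
Qed.

End BinomialMembership.

Section PrimeChain.
Variables (K : fieldType) (s : nat) (L : 'rV[int]_s -> Prop) (c : 'I_s -> nat).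
Hypothesis L_sum0 : forall a, L a -> \sum_j a 0 j = 0.
Hypothesis Lc : forall a, L a -> \sum_j a 0 j * (c j)%:Z = 0.

(* [t_j |-> y ^ c_j * x] in [K[y][x]]: the outer variable is [x]. *)
Definition subst_xy : {rmorphism {mpoly K[s]} -> {poly {poly K}}} :=
  mmap (@polyC {poly K} \o @polyC K) (fun j => ('X^(c j))%:P * 'X).

Lemma subst_xy_mnm m :
  subst_xy 'X_[m] = ('X^(\sum_j m j * c j))%:P * 'X^(mdeg m).
Proof.
rewrite /= mmapX /mmap1 (eq_bigr (fun j => ('X^(c j))%:P ^+ m j * 'X ^+ m j)).
  rewrite big_split /= prodrXr mdegE; congr (_ * _).
  rewrite -prodrXr rmorph_prod; apply: eq_bigr => j _.
  by rewrite -rmorphXn /= mulnC exprM.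
by move=> j _; rewrite exprMn.
Qed.

Lemma subst_x_xy p : subst_x K s p = map_poly (horner_eval 1) (subst_xy p).
Proof.
apply: (@mpoly_rmorph_eq _ _ _ (subst_x K s) (map_poly (horner_eval 1) \o subst_xy)).
  by move=> a; rewrite /= !mmapC /= map_polyC /= horner_evalE hornerC.
move=> j; rewrite /= !mmapX !mmap1U rmorphM /= map_polyC map_polyX /=.
by rewrite horner_evalE hornerXn expr1n mul1r.
Qed.

Lemma eval0_subst_x p : meval (fun=> 0) p = (subst_x K s p).[0].
Proof.
apply: (@mpoly_rmorph_eq _ _ _ (meval (fun=> 0)) (horner_eval 0 \o subst_x K s)).
  by move=> a; rewrite /= mevalC mmapC /= horner_evalE hornerC.
by move=> j; rewrite /= mevalXU mmapX mmap1U horner_evalE hornerX.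
Qed.

Lemma lattice_ideal_subst_xy p : @lattice_ideal K s L p -> subst_xy p = 0.
Proof.
apply: lattice_ideal_ker => a La; rewrite tpos_mnm tneg_mnm !subst_xy_mnm.
have /eqP := L_sum0 La; rewrite row_sum_mdeg subr_eq0 => /eqP[->].
by have /eqP := Lc La; rewrite row_dot_mnm subr_eq0 => /eqP[->].
Qed.

Lemma lattice_ideal_chain2 i j : c i != c j -> prime_chain_over (@lattice_ideal K s L) 2.
Proof.
move=> ne_cij.
pose P k p := match k with
  | 0 => subst_xy p = 0 | 1 => subst_x K s p = 0 | _ => meval (fun=> 0) p = 0 end.
have P01 p : subst_xy p = 0 -> subst_x K s p = 0.
  by rewrite subst_x_xy => ->; rewrite rmorph0.
have P12 p : subst_x K s p = 0 -> meval (fun=> 0) p = 0.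
  by rewrite eval0_subst_x => ->; rewrite horner0.
exists P; split=> [[|[|k]] _ | [|[|k]] //= _]; split; rewrite /=.
- exact: rmorph_ker_prime.
- exact: lattice_ideal_subst_xy.
- exact: rmorph_ker_prime.
- by move=> p /lattice_ideal_subst_xy /P01.
- exact: rmorph_ker_prime.
- by move=> p /lattice_ideal_subst_xy /P01 /P12.
- exact: P01.
- exists ('X_i - 'X_j); rewrite !rmorphB /= !subst_x_mnm !subst_xy_mnm.
  rewrite !mdeg1 subrr -mulrBl -rmorphB; split=> // /eqP.
  rewrite mulf_eq0 polyX_eq0 orbF polyC_eq0 subr_eq0 => /eqP.
  have weightU k : (\sum_l U_(k)%MM l * c l)%N = c k.
    rewrite (bigD1 k) //= mnm1E eqxx mul1n big1 ?addn0 // => l ne_lk.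
    by rewrite mnm1E eq_sym (negbTE ne_lk).
  move/(congr1 (fun q : {poly K} => size q)); rewrite !size_polyXn !weightU => -[eq_cij].
  by rewrite eq_cij eqxx in ne_cij.
- exact: P12.
- exists 'X_j; rewrite /= mevalXU subst_x_mnm mdeg1; split=> //.
  by move=> /eqP; rewrite expr1 polyX_eq0.
Qed.

End PrimeChain.

Section UnitDifferences.
Variables (K : fieldType) (s : nat).
Implicit Types (L : 'rV[int]_s -> Prop) (i j : 'I_s).

Local Notation e i := (delta_mx 0 i : 'rV[int]_s).

Lemma unit_diff_binomial i j :
  i != j -> tpos K (e i - e j) - tneg K (e i - e j) = 'X_i - 'X_j.
Proof.
move=> ne_ij; rewrite tpos_mnm tneg_mnm; congr ('X_[_] - 'X_[_]); apply/mnmP => k.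
all: rewrite mnmE mnm1E !mxE eqxx /= ?[i == k]eq_sym ?[j == k]eq_sym.
all: have [->|_] := eqVneq k i; first by rewrite (negbTE ne_ij).
all: by case: (eqVneq k j) => _.
Qed.

Lemma row_dot_unit_diff (c : 'I_s -> int) i j :
  \sum_k (e i - e j) 0 k * c k = c i - c j.
Proof.
have sum_ind l : \sum_k (k == l)%:R * c k = c l.
  by rewrite (bigD1 l) //= eqxx mul1r big1 ?addr0 // => k /negbTE ->; rewrite mul0r.
rewrite -!sum_ind -sumrB; apply: eq_bigr => k _.
by rewrite !mxE eqxx -mulrBl.
Qed.

Lemma lattice_nat_form L (c : 'I_s -> int) i j :
  (forall a, L a -> \sum_k a 0 k = 0) ->
  (forall a, L a -> \sum_k a 0 k * c k = 0) -> c i != c j ->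
  exists2 c' : 'I_s -> nat,
    forall a, L a -> \sum_k a 0 k * (c' k)%:Z = 0 & c' i != c' j.
Proof.
move=> L_sum0 Lc ne_cij; pose N : int := \sum_k `|c k|.
have c'E k : (absz (c k + N))%:Z = c k + N.
  apply: gez0_abs; rewrite -[N]opprK subr_ge0; apply: lerNnormlW.
  by rewrite /N (bigD1 k) //= ler_wpDr ?sumr_ge0.
exists (fun k => absz (c k + N)) => [a La | ].
  under eq_bigr do rewrite c'E mulrDr.
  by rewrite big_split /= Lc // -mulr_suml L_sum0 // mul0r addr0.
apply: contra ne_cij => /eqP eq_c'.
by apply/eqP/(addIr N); rewrite -(c'E i) -(c'E j) eq_c'.
Qed.

Lemma torsion_free_unit_diff L i j : is_lattice L ->
  (forall a, L a -> \sum_k a 0 k = 0) -> ~ prime_chain_over (@lattice_ideal K s L) 2 ->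
  torsion_free_quot L -> L (e i - e j).
Proof.
move=> hL L_sum0 no_chain tf; case: (pselect (L (e i - e j))) => // nL.
have nLZ m : m != 0 -> ~ L (m *: (e i - e j)) by move=> m0 /(tf _ _ m0).
have [c [Lc]] := lattice_separating_form hL nLZ.
rewrite row_dot_unit_diff subr_eq0 => ne_cij.
have [c' Lc' ne_c'ij] := lattice_nat_form L_sum0 Lc ne_cij.
by case: no_chain; apply: (lattice_ideal_chain2 K L_sum0 Lc' ne_c'ij).
Qed.

End UnitDifferences.

Section DiffIdealVsLatticeIdeal.
Variables (K : fieldType) (s : nat) (L : 'rV[int]_s -> Prop).
Hypothesis s_gt0 : (0 < s)%N.
Local Notation J := (ideal_gen (@diff_gens K s)).

Lemma lattice_ideal_sub_diff_ideal :
  (forall a, L a -> \sum_j a 0 j = 0) -> forall p, @lattice_ideal K s L p -> J p.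
Proof.
move=> L_sum0; apply: ideal_gen_min; first exact: ideal_gen_ideal.
by move=> _ [a [La ->]]; apply/(diff_ideal_binomial K s_gt0)/L_sum0.
Qed.

Lemma diff_ideal_sub_lattice_ideal :
  (forall i, L (delta_mx 0 i - delta_mx 0 (ilast s_gt0))) ->
  forall p, J p -> @lattice_ideal K s L p.
Proof.
move=> Le; apply: ideal_gen_min; first exact: ideal_gen_ideal.
move=> _ [i [j [lt_i [j_last ->]]]]; have -> : j = ilast s_gt0 by apply: val_inj.
have ne_ij : i != ilast s_gt0 by rewrite -(inj_eq val_inj) /= neq_ltn lt_i.
by rewrite -(unit_diff_binomial K ne_ij); apply: lattice_binomial.
Qed.

End DiffIdealVsLatticeIdeal.

Theorem corollary3p20 (K : fieldType) (s : nat) (hs : (2 <= s)%N)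
  (L : 'rV[int]_s -> Prop) (hL : is_lattice L)
  (hgr : graded_ideal (@lattice_ideal K s L))
  (hdim : krull_dim_quot (@lattice_ideal K s L) 1) :
  torsion_free_quot L <->
  (forall p : {mpoly K[s]}, @lattice_ideal K s L p <-> ideal_gen (@diff_gens K s) p).
Proof.
have L_sum0 := graded_lattice_sum0 hgr.
have s_gt0 : (0 < s)%N by apply: ltnW.
split=> [tf p | I_eq v m m0 Lmv].
  split; first exact: lattice_ideal_sub_diff_ideal.
  apply: diff_ideal_sub_lattice_ideal => i.
  exact: torsion_free_unit_diff hL L_sum0 hdim.2 tf.
apply: (lattice_ideal_binomial hL L_sum0); apply/I_eq/(diff_ideal_binomial K s_gt0).
have /eqP := L_sum0 _ Lmv; under eq_bigr do rewrite mxE.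
by rewrite -mulr_sumr mulf_eq0 (negbTE m0) => /eqP.
Qed.
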